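(* In the derived category $\mathcal D(\underline{\mathbb Z/2})$ one has: (a) $A_k^{op}\simeq\Sigma^{-k}A_k$ for $k\ge 0$; (b) $H(n)^{op}\simeq H(-(n+2))$ for all $n\in\mathbb Z$; (c) $B_r^{op}\simeq\Sigma^{r+4}B_r$ for $r\geq0$.
   Context: A $\underline{\mathbb Z/2}$-module is a pair of $\mathbb F_2$-vector spaces $M_\Theta,M_\bullet$ with maps $t\colon M_\Theta\to M_\Theta$, $p^*\colon M_\bullet\to M_\Theta$, $p_*\colon M_\Theta\to M_\bullet$ with $tp^*=p^*$, $p_*t=p_*$, $t^2=1$, $p^*p_*=1+t$, $p_*p^*=0$. $H$: both spaces $\mathbb F_2$, $t=p^*=\mathrm{id}$, $p_*=0$. $F$: $F_\Theta=\mathbb F_2^2$, $t$ the swap, $F_\bullet=\mathbb F_2$, $p_*(x,y)=x+y$, $p^*(z)=(z,z)$. $p\colon F\to H$, $p\colon H\to F$ the unique nonzero maps, $u=1+t$. Homological grading, $(\Sigma C)_i=C_{i-1}$. $A_k$: $F$ in degrees $k,\dots,0$, differentials $u$. $H(0)=H$ in degree $0$; for $n>0$, $H(-n)$: $H$ in degree $n$, $F$ in degrees $n-1,\dots,0$, differentials $p,u,\dots,u$; $H(n)$: $F$ in degrees $0,\dots,-(n-1)$, $H$ in degree $-n$, differentials $u,\dots,u,p$. $B_r$: $H$ in degree $0$, $F$ in degrees $-1,\dots,-(r+1)$, $H$ in degree $-(r+2)$, differentials $p,u,\dots,u,p$. For a module $M$, $M^{op}$ has $(M^{op})_\Theta=(M_\Theta)^\vee$,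 $(M^{op})_\bullet=(M_\bullet)^\vee$ (linear duals), $t_{M^{op}}=t_M^\vee$, $p^*_{M^{op}}=(p_*^M)^\vee$, $p_*^{M^{op}}=(p^*_M)^\vee$. For a complex $C$, $C^{op}$ is the complex with $(C^{op})_i=(C_{-i})^{op}$ and dual differentials; this preserves quasi-isomorphisms and so is defined on $\mathcal D(\underline{\mathbb Z/2})$. *)

From mathcomp Require Import all_boot all_algebra.
From mathcomp Require Import zify.
From Stdlib Require Import Relations.
Set Implicit Arguments. Unset Strict Implicit. Unset Printing Implicit Defensive.
Import GRing.Theory Num.Theory.
Local Open Scope ring_scope.

Ltac mxdec := apply/matrixP=> i j; rewrite !mxE ?big_ord_recl ?big_ord0 ?mxE /=;
  repeat match goal with | i : 'I_ _ |- _ => let k := fresh in case: i => -[|[|[|]]] k //= end;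
  by apply/eqP.

(* M_Theta = 'rV_(dT), M_bullet = 'rV_(dB);  t : M_Theta -> M_Theta,
   p^* = res : M_bullet -> M_Theta,  p_* = ind : M_Theta -> M_bullet.
   A linear map f is encoded by its matrix A with f v = v *m A, so the
   composite "f then g" has matrix A *m B. *)
Record Z2Mod := MkZ2Mod {
  dT : nat; dB : nat;
  tM : 'M['F_2]_(dT, dT);
  resM : 'M['F_2]_(dB, dT);
  indM : 'M['F_2]_(dT, dB);
  ax_tres : resM *m tM = resM;
  ax_indt : tM *m indM = indM;
  ax_tt   : tM *m tM = 1%:M;
  ax_resind : indM *m resM = 1%:M + tM;
  ax_indres : resM *m indM = 0
}.

Definition is_hom (M N : Z2Mod) (fT : 'M['F_2]_(dT M, dT N)) (fB : 'M['F_2]_(dB M, dB N)) :=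
  [/\ tM M *m fT = fT *m tM N, resM M *m fT = fB *m resM N & indM M *m fB = fT *m indM N].

(* M^op : linear duals; t^vee, p^* := dual of p_*, p_* := dual of p^* .
   In dual bases the dual of v |-> v *m A is the transpose. *)
Definition dualM (M : Z2Mod) : Z2Mod.
Proof.
refine (@MkZ2Mod (dT M) (dB M) (tM M)^T (indM M)^T (resM M)^T _ _ _ _ _).
- by rewrite -trmx_mul ax_indt.
- by rewrite -trmx_mul ax_tres.
- by rewrite -trmx_mul ax_tt trmx1.
- by rewrite -trmx_mul ax_resind linearD /= trmx1.
- by rewrite -trmx_mul ax_indres trmx0.
Defined.

Lemma dual_hom (M N : Z2Mod) (fT : 'M['F_2]_(dT M, dT N)) (fB : 'M['F_2]_(dB M, dB N)) :
  @is_hom M N fT fB ->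
  @is_hom (dualM N) (dualM M) fT^T fB^T.
Proof.
rewrite /is_hom /= => -[h1 h2 h3]; split; rewrite -!trmx_mul; congr trmx; by [rewrite h1|rewrite h3|rewrite h2].
Qed.

Definition sw : 'M['F_2]_2 := \matrix_(i, j) (if i == j then 0 else 1).
Definition ones (m n : nat) : 'M['F_2]_(m, n) := const_mx 1.

Definition Hmod : Z2Mod.
Proof. refine (@MkZ2Mod 1 1 1%:M 1%:M 0 _ _ _ _ _); mxdec. Defined.
Definition Fmod : Z2Mod.
Proof. refine (@MkZ2Mod 2 1 sw (ones 1 2) (ones 2 1) _ _ _ _ _); mxdec. Defined.
Definition Zmod : Z2Mod.
Proof. refine (@MkZ2Mod 0 0 0 0 0 _ _ _ _ _); mxdec. Defined.

Inductive kind := KZ | KH | KF.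
Definition modK (a : kind) : Z2Mod :=
  match a with KZ => Zmod | KH => Hmod | KF => Fmod end.

(* the canonical maps: p : H -> F, p : F -> H (the unique nonzero maps),
   u = 1 + t : F -> F (its bullet component is forced to be 0), else 0 *)
Definition canonT (a b : kind) : 'M['F_2]_(dT (modK a), dT (modK b)) :=
  match a, b with
  | KH, KF => ones 1 2
  | KF, KH => ones 2 1
  | KF, KF => 1%:M + sw
  | _, _ => 0
  end.
Definition canonB (a b : kind) : 'M['F_2]_(dB (modK a), dB (modK b)) :=
  match a, b with
  | KH, KF => 1%:M
  | _, _ => 0
  end.

Lemma canon_hom a b : is_hom (canonT a b) (canonB a b).
Proof. by case: a; case: b; split; mxdec. Qed.

Definition bad (a b c : kind) := match a, b, c with KF, KH, KF => true | _, _, _ => false end.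

Lemma canon_sq a b c : bad a b c = false ->
  canonT a b *m canonT b c = 0 /\ canonB a b *m canonB b c = 0.
Proof. by case: a; case: b; case: c => //= _; split; mxdec. Qed.

Record cplx := MkCplx {
  ob : int -> Z2Mod;
  dTh : forall i j : int, 'M['F_2]_(dT (ob i), dT (ob j));
  dBu : forall i j : int, 'M['F_2]_(dB (ob i), dB (ob j));
  d_hom : forall i j, is_hom (dTh i j) (dBu i j);
  d_deg : forall i j, j + 1 != i -> dTh i j = 0 /\ dBu i j = 0;
  d_sqT : forall i j k, dTh i j *m dTh j k = 0;
  d_sqB : forall i j k, dBu i j *m dBu j k = 0
}.

(* shift: (Sigma^k C)_i = C_{i-k}  (signs are irrelevant in characteristic 2) *)
Definition shiftC (k : int) (C : cplx) : cplx.
Proof.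
refine (@MkCplx (fun i => ob C (i - k)) (fun i j => dTh C (i - k) (j - k))
                (fun i j => dBu C (i - k) (j - k)) (fun i j => @d_hom C _ _) _ _ _).
- move=> i j h; apply: d_deg; apply: contra h => /eqP e; apply/eqP.
  lia.
- by move=> i j l; apply: d_sqT.
- by move=> i j l; apply: d_sqB.
Defined.

Definition opC (C : cplx) : cplx.
Proof.
refine (@MkCplx (fun i => dualM (ob C (- i))) (fun i j => (dTh C (- j) (- i))^T)
                (fun i j => (dBu C (- j) (- i))^T) (fun i j => dual_hom (@d_hom C _ _)) _ _ _).
- move=> i j h; have [] := @d_deg C (- j) (- i).
    apply: contra h => /eqP e; apply/eqP.
    lia.
  by move=> -> ->; rewrite !trmx0.
- by move=> i j l; rewrite -trmx_mul d_sqT trmx0.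
- by move=> i j l; rewrite -trmx_mul d_sqB trmx0.
Defined.

Definition kdT (kap : int -> kind) (i j : int) : 'M['F_2]_(dT (modK (kap i)), dT (modK (kap j))) :=
  if j + 1 == i then canonT (kap i) (kap j) else 0.
Definition kdB (kap : int -> kind) (i j : int) : 'M['F_2]_(dB (modK (kap i)), dB (modK (kap j))) :=
  if j + 1 == i then canonB (kap i) (kap j) else 0.

Definition kcplx (kap : int -> kind)
  (hk : forall k : int, bad (kap (k + 1 + 1)) (kap (k + 1)) (kap k) = false) : cplx.
Proof.
refine (@MkCplx (fun i => modK (kap i)) (kdT kap) (kdB kap) _ _ _ _).
- move=> i j; rewrite /kdT /kdB; case: ifP => _; first exact: canon_hom.
  by split; rewrite ?mulmx0 ?mul0mx.
- by move=> i j /negbTE h; rewrite /kdT /kdB h.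
- move=> i j l; rewrite /kdT; case: eqP => [<-|]; last by rewrite mul0mx.
  case: eqP => [<-|]; last by rewrite mulmx0.
  by have [] := canon_sq (hk l).
- move=> i j l; rewrite /kdB; case: eqP => [<-|]; last by rewrite mul0mx.
  case: eqP => [<-|]; last by rewrite mulmx0.
  by have [] := canon_sq (hk l).
Defined.

Definition kapA (k : nat) (i : int) : kind :=
  if (0 <= i) && (i <= k%:Z) then KF else KZ.
(* H(m), m : int.  m = 0: H in degree 0.  m = -n < 0: H in degree n, F in
   degrees n-1..0.  m = n > 0: F in degrees 0..-(n-1), H in degree -n. *)
Definition kapH (m : int) (i : int) : kind :=
  if i == - m then KH
  else if ((0 <= i) && (i < - m)) || ((- m < i) && (i <= 0)) then KF else KZ.
Definition kapB (r : nat) (i : int) : kind :=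
  if (i == 0) || (i == - (r%:Z + 2)) then KH
  else if (- (r%:Z + 2) < i) && (i < 0) then KF else KZ.

Ltac kap_ok kapX l :=
  let E1 := fresh in let E2 := fresh in let E3 := fresh in
  rewrite /bad; case E1: (kapX (l + 1 + 1)); case E2: (kapX (l + 1)); case E3: (kapX l) => //;
  move: E1 E2 E3; rewrite /kapA /kapH /kapB;
  repeat (case: ifP => /= ?) => //; intros; lia.

Lemma kapA_ok k l : bad (kapA k (l + 1 + 1)) (kapA k (l + 1)) (kapA k l) = false.
Proof. kap_ok (kapA k) l. Qed.

Lemma kapH_ok m l : bad (kapH m (l + 1 + 1)) (kapH m (l + 1)) (kapH m l) = false.
Proof. kap_ok (kapH m) l. Qed.

Lemma kapB_ok r l : bad (kapB r (l + 1 + 1)) (kapB r (l + 1)) (kapB r l) = false.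
Proof. kap_ok (kapB r) l. Qed.

Definition Acx (k : nat) : cplx := kcplx (@kapA_ok k).
Definition Hcx (m : int) : cplx := kcplx (@kapH_ok m).
Definition Bcx (r : nat) : cplx := kcplx (@kapB_ok r).

(* f induces isomorphisms on homology at every degree j:
   H_j = ker (d j (j-1)) / im (d (j+1) j). *)
Definition hiso (a b : int -> nat) (dX : forall i j, 'M['F_2]_(a i, a j))
  (dY : forall i j, 'M['F_2]_(b i, b j)) (f : forall i, 'M['F_2]_(a i, b i)) :=
  forall j : int,
    (forall x : 'rV['F_2]_(a j), x *m dX j (j - 1) = 0 ->
       (exists y, x *m f j = y *m dY (j + 1) j) -> exists z, x = z *m dX (j + 1) j) /\
    (forall y : 'rV['F_2]_(b j), y *m dY j (j - 1) = 0 ->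
       exists x z, x *m dX j (j - 1) = 0 /\ y = x *m f j + z *m dY (j + 1) j).

Definition is_chain (C D : cplx) (fT : forall i, 'M['F_2]_(dT (ob C i), dT (ob D i)))
  (fB : forall i, 'M['F_2]_(dB (ob C i), dB (ob D i))) :=
  (forall i, is_hom (fT i) (fB i)) /\
  (forall i j, dTh C i j *m fT j = fT i *m dTh D i j /\ dBu C i j *m fB j = fB i *m dBu D i j).

Definition qiso (C D : cplx) : Prop :=
  exists fT fB, @is_chain C D fT fB /\
    hiso (dTh C) (dTh D) fT /\ hiso (dBu C) (dBu D) fB.

Definition dIso : relation cplx := clos_refl_sym_trans cplx qiso.

From mathcomp Require Import all_boot all_algebra zify.
From Stdlib Require Import Relations.
Set Implicit Arguments. Unset Strict Implicit. Unset Printing Implicit Defensive.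
Import GRing.Theory Num.Theory.
Local Open Scope ring_scope.

(* The complexes in the statement are strings of copies of H and F joined by the
   canonical maps p and u. Dualising reverses such a string and fixes F and u, but
   turns H into O = H^op, which is not isomorphic to H. So (a) is an isomorphism of
   complexes after relabelling, while (b) and (c) need quasi-isomorphisms. These come
   from the exact sequence 0 -> H -> F -> F -> O -> 0 (maps p, u, p^vee), which lets
   an end O of a string be traded for H -> F -> F and an end H for F -> F -> O; the
   chain maps are the identity (or zero) away from one degree, where they are p, u
   or p^vee.
   Whether such a map is an isomorphism on homology in degree j only depends on
   degrees j-1, j, j+1, where all spaces have dimension at most 2 over F_2, so it is
   decided by enumerating vectors. *)

Definition vec1 (a : 'F_2) : 'rV['F_2]_1 := \row_(j < 1) a.
Definition vec2 (a b : 'F_2) : 'rV['F_2]_2 :=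
  \row_(j < 2) (if (j : nat) == 0%N then a else b).

Lemma F2_cases (a : 'F_2) : a = 0 \/ a = 1.
Proof. by case: a => -[|[|]] // h; [left|right]; apply: val_inj. Qed.

Lemma rowF2_0 (x : 'rV['F_2]_0) : x = 0.
Proof. by apply/matrixP => i []. Qed.

Lemma rowF2_1 (x : 'rV['F_2]_1) : x = vec1 0 \/ x = vec1 1.
Proof.
by case: (F2_cases (x 0 0)) => h; [left|right]; apply/matrixP => i j; rewrite !mxE !ord1.
Qed.

Lemma rowF2_2 (x : 'rV['F_2]_2) :
  [\/ x = vec2 0 0, x = vec2 0 1, x = vec2 1 0 | x = vec2 1 1].
Proof.
have -> : x = vec2 (x 0 0) (x 0 1).
  by apply/matrixP => i [[|[|]] //= k]; rewrite !mxE ord1; congr (x _ _); apply: val_inj.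
by case: (F2_cases (x 0 0)) => ->; case: (F2_cases (x 0 1)) => ->; constructor.
Qed.

Ltac mx_eval := apply/matrixP=> i j; rewrite ?mxE ?big_ord_recl ?big_ord0 ?mxE /=;
  repeat match goal with i : 'I_ _ |- _ => let k := fresh in case: i => -[|[|[|]]] k //= end;
  by apply/eqP.

Ltac enum_row x :=
  first [ rewrite (rowF2_0 x) | case: (rowF2_1 x) => -> | case: (rowF2_2 x) => -> ].

Ltac absurd_mx := let H := fresh in move=> /matrixP H; exfalso;
  first [ move: (H ord0 ord0); rewrite !mxE ?big_ord_recl ?big_ord0 ?mxE /=; move/eqP; by []
        | move: (H ord0 (@Ordinal 2 1 isT));
          rewrite !mxE ?big_ord_recl ?big_ord0 ?mxE /=; move/eqP; by [] ].

Ltac intro_eq_or_absurd := first [ absurd_mx | move=> _ ].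

Ltac exists_row k :=
  first [ exists 0; k | exists (vec1 0); k | exists (vec1 1); k
        | exists (vec2 0 0); k | exists (vec2 0 1); k | exists (vec2 1 0); k
        | exists (vec2 1 1); k ].

Inductive ekind := EZ | EH | EF | EO.

(* O = H^op: both spaces F_2, t = 1, p^* = 0, p_* = 1. *)
Definition Omod : Z2Mod := dualM Hmod.

Definition modE (e : ekind) : Z2Mod :=
  match e with EZ => Zmod | EH => Hmod | EF => Fmod | EO => Omod end.

Definition toE (a : kind) : ekind := match a with KZ => EZ | KH => EH | KF => EF end.
Definition dualE (a : kind) : ekind := match a with KZ => EZ | KH => EO | KF => EF end.

(* Besides the maps of [canonT], the duals F -> O and O -> F of p : H -> F and p : F -> H. *)
Definition ecanT (a c : ekind) : 'M['F_2]_(dT (modE a), dT (modE c)) :=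
  match a, c with
  | EH, EF => ones 1 2
  | EF, EH => ones 2 1
  | EF, EF => 1%:M + sw
  | EO, EF => ones 1 2
  | EF, EO => ones 2 1
  | _, _ => 0
  end.
Definition ecanB (a c : ekind) : 'M['F_2]_(dB (modE a), dB (modE c)) :=
  match a, c with
  | EH, EF => 1%:M
  | EF, EO => 1%:M
  | _, _ => 0
  end.

Lemma ecan_hom a c : is_hom (ecanT a c) (ecanB a c).
Proof. by case: a; case: c; split; mx_eval. Qed.

Definition ebad (a b c : ekind) :=
  match a, b, c with EF, EH, EF | EF, EO, EF | EH, EF, EO => true | _, _, _ => false end.

Lemma ecan_comp0 a b c : ebad a b c = false ->
  ecanT a b *m ecanT b c = 0 /\ ecanB a b *m ecanB b c = 0.
Proof. by case: a; case: b; case: c => //= _; split; mx_eval. Qed.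

Lemma ebad_toE a b c : ebad (toE a) (toE b) (toE c) = bad a b c.
Proof. by case: a; case: b; case: c. Qed.

Lemma ebad_dualE a b c : ebad (dualE a) (dualE b) (dualE c) = bad c b a.
Proof. by case: a; case: b; case: c. Qed.

Definition edT (kap : int -> ekind) (i j : int) :
    'M['F_2]_(dT (modE (kap i)), dT (modE (kap j))) :=
  if j + 1 == i then ecanT (kap i) (kap j) else 0.
Definition edB (kap : int -> ekind) (i j : int) :
    'M['F_2]_(dB (modE (kap i)), dB (modE (kap j))) :=
  if j + 1 == i then ecanB (kap i) (kap j) else 0.

Definition ekcplx (kap : int -> ekind)
  (hk : forall k : int, ebad (kap (k + 1 + 1)) (kap (k + 1)) (kap k) = false) : cplx.
Proof.
refine (@MkCplx (fun i => modE (kap i)) (edT kap) (edB kap) _ _ _ _).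
- move=> i j; rewrite /edT /edB; case: ifP => _; first exact: ecan_hom.
  by split; rewrite ?mulmx0 ?mul0mx.
- by move=> i j /negbTE h; rewrite /edT /edB h.
- move=> i j l; rewrite /edT; case: eqP => [<-|]; last by rewrite mul0mx.
  case: eqP => [<-|]; last by rewrite mulmx0.
  by have [] := ecan_comp0 (hk l).
- move=> i j l; rewrite /edB; case: eqP => [<-|]; last by rewrite mul0mx.
  case: eqP => [<-|]; last by rewrite mulmx0.
  by have [] := ecan_comp0 (hk l).
Defined.

Section KindSequences.
Variable kap : int -> kind.
Hypothesis kap_ok : forall k : int, bad (kap (k + 1 + 1)) (kap (k + 1)) (kap k) = false.

Lemma toE_ok k : ebad (toE (kap (k + 1 + 1))) (toE (kap (k + 1))) (toE (kap k)) = false.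
Proof. by rewrite ebad_toE. Qed.

Lemma dualE_ok k :
  ebad (dualE (kap (- (k + 1 + 1)))) (dualE (kap (- (k + 1)))) (dualE (kap (- k))) = false.
Proof.
rewrite ebad_dualE -(kap_ok (- (k + 1 + 1))).
have -> : - (k + 1 + 1) + 1 = - (k + 1) by lia.
by have -> : - (k + 1) + 1 = - k by lia.
Qed.

Lemma shift_ok s k : bad (kap (k + 1 + 1 - s)) (kap (k + 1 - s)) (kap (k - s)) = false.
Proof.
rewrite -(kap_ok (k - s)).
have -> : k - s + 1 = k + 1 - s by lia.
by have -> : k + 1 - s + 1 = k + 1 + 1 - s by lia.
Qed.

End KindSequences.

Lemma hiso_of_iso (a b : int -> nat) (dX : forall i j, 'M['F_2]_(a i, a j))
  (dY : forall i j, 'M['F_2]_(b i, b j)) (f : forall i, 'M['F_2]_(a i, b i))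
  (g : forall i, 'M['F_2]_(b i, a i)) :
  (forall i j, dX i j *m f j = f i *m dY i j) ->
  (forall i, f i *m g i = 1%:M) -> (forall i, g i *m f i = 1%:M) -> hiso dX dY f.
Proof.
move=> fd fg gf.
have gd i j : dY i j *m g j = g i *m dX i j.
  by rewrite -[RHS]mulmx1 -(fg j) !mulmxA -[g i *m dX i j *m f j]mulmxA fd mulmxA gf mul1mx.
move=> j; split.
- move=> x _ [y hy]; exists (y *m g (j + 1)).
  by rewrite -mulmxA -gd mulmxA -hy -mulmxA fg mulmx1.
- move=> y hy; exists (y *m g j), 0; split.
    by rewrite -mulmxA -gd mulmxA hy mul0mx.
  by rewrite mul0mx addr0 -mulmxA gf mulmx1.
Qed.

Lemma qiso_of_iso (C D : cplx) (fT : forall i, 'M['F_2]_(dT (ob C i), dT (ob D i)))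
  (fB : forall i, 'M['F_2]_(dB (ob C i), dB (ob D i)))
  (gT : forall i, 'M['F_2]_(dT (ob D i), dT (ob C i)))
  (gB : forall i, 'M['F_2]_(dB (ob D i), dB (ob C i))) :
  is_chain fT fB ->
  (forall i, fT i *m gT i = 1%:M /\ gT i *m fT i = 1%:M) ->
  (forall i, fB i *m gB i = 1%:M /\ gB i *m fB i = 1%:M) ->
  qiso C D.
Proof.
move=> [hom fd] gT_inv gB_inv; exists fT, fB; split=> //; split.
- by apply: (hiso_of_iso (g := gT)) => [i j|i|i]; [case: (fd i j)|case: (gT_inv i)..].
- by apply: (hiso_of_iso (g := gB)) => [i j|i|i]; [case: (fd i j)|case: (gB_inv i)..].
Qed.

(* Identity matrices, written by cases on the kind so that the dimensions agree
   definitionally; each is inverse to its transpose. *)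
Definition toT (a : kind) : 'M['F_2]_(dT (modK a), dT (modE (toE a))) :=
  match a with KZ | KH | KF => 1%:M end.
Definition toB (a : kind) : 'M['F_2]_(dB (modK a), dB (modE (toE a))) :=
  match a with KZ | KH | KF => 1%:M end.
Definition dualT (a : kind) : 'M['F_2]_(dT (dualM (modK a)), dT (modE (dualE a))) :=
  match a with KZ | KH | KF => 1%:M end.
Definition dualB (a : kind) : 'M['F_2]_(dB (dualM (modK a)), dB (modE (dualE a))) :=
  match a with KZ | KH | KF => 1%:M end.

Lemma trmx_sw : sw^T = sw.
Proof. by mx_eval. Qed.

Ltac trmx_simpl := rewrite /= ?trmx0 ?trmx1 /ones ?trmx_const ?linearD /= ?trmx1 ?trmx_sw.

Lemma toE_hom a : is_hom (toT a) (toB a).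
Proof. by case: a; split; mx_eval. Qed.

Lemma dualE_hom a : @is_hom (dualM (modK a)) (modE (dualE a)) (dualT a) (dualB a).
Proof. by case: a; rewrite /is_hom; trmx_simpl; split; mx_eval. Qed.

Lemma toE_inv a :
  (toT a *m (toT a)^T = 1%:M /\ (toT a)^T *m toT a = 1%:M) /\
  (toB a *m (toB a)^T = 1%:M /\ (toB a)^T *m toB a = 1%:M).
Proof. by case: a; rewrite /= !trmx1 !mul1mx. Qed.

Lemma dualE_inv a :
  (dualT a *m (dualT a)^T = 1%:M /\ (dualT a)^T *m dualT a = 1%:M) /\
  (dualB a *m (dualB a)^T = 1%:M /\ (dualB a)^T *m dualB a = 1%:M).
Proof. by case: a; rewrite /= !trmx1 !mul1mx. Qed.

Lemma canon_toE a c :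
  canonT a c *m toT c = toT a *m ecanT (toE a) (toE c) /\
  canonB a c *m toB c = toB a *m ecanB (toE a) (toE c).
Proof. by case: a; case: c; split; mx_eval. Qed.

Lemma canon_dualE a c :
  (canonT c a)^T *m dualT c = dualT a *m ecanT (dualE a) (dualE c) /\
  (canonB c a)^T *m dualB c = dualB a *m ecanB (dualE a) (dualE c).
Proof. by case: a; case: c; trmx_simpl; split; mx_eval. Qed.

Lemma toE_qiso kap hk : qiso (@kcplx kap hk) (@ekcplx (fun i => toE (kap i)) (toE_ok hk)).
Proof.
apply: (@qiso_of_iso (kcplx hk) (ekcplx (toE_ok hk))
  (fun i => toT (kap i)) (fun i => toB (kap i))
  (fun i => (toT (kap i))^T) (fun i => (toB (kap i))^T)).
- split=> [i|i j]; first exact: toE_hom.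
  rewrite /= /kdT /kdB /edT /edB; case: ifP => _; last by rewrite !mul0mx !mulmx0.
  exact: canon_toE.
- by move=> i; case: (toE_inv (kap i)).
- by move=> i; case: (toE_inv (kap i)).
Qed.

Lemma opC_qiso kap hk :
  qiso (opC (@kcplx kap hk)) (@ekcplx (fun i => dualE (kap (- i))) (dualE_ok hk)).
Proof.
apply: (@qiso_of_iso (opC (kcplx hk)) (ekcplx (dualE_ok hk))
  (fun i => dualT (kap (- i))) (fun i => dualB (kap (- i)))
  (fun i => (dualT (kap (- i)))^T) (fun i => (dualB (kap (- i)))^T)).
- split=> [i|i j]; first exact: dualE_hom.
  rewrite /= /kdT /kdB /edT /edB.
  have -> : (- i + 1 == - j) = (j + 1 == i) by apply/eqP/eqP; lia.
  case: ifP => _; last by rewrite !trmx0 !mul0mx !mulmx0.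
  exact: canon_dualE.
- by move=> i; case: (dualE_inv (kap (- i))).
- by move=> i; case: (dualE_inv (kap (- i))).
Qed.

Lemma shiftC_qiso s kap hk :
  qiso (shiftC s (@kcplx kap hk)) (@kcplx (fun i => kap (i - s)) (shift_ok hk s)).
Proof.
apply: (@qiso_of_iso (shiftC s (kcplx hk)) (kcplx (shift_ok hk s))
  (fun i => 1%:M) (fun i => 1%:M) (fun i => 1%:M) (fun i => 1%:M)).
- split=> [i|i j]; first by split; rewrite mulmx1 mul1mx.
  rewrite /= /kdT /kdB mulmx1 mul1mx mulmx1 mul1mx.
  by have -> : (j - s + 1 == i - s) = (j + 1 == i) by apply/eqP/eqP; lia.
- by move=> i; rewrite mulmx1.
- by move=> i; rewrite mulmx1.
Qed.

Definition eidT (a c : ekind) : 'M['F_2]_(dT (modE a), dT (modE c)) :=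
  match a, c with
  | EZ, EZ | EH, EH | EF, EF | EO, EO => 1%:M
  | _, _ => 0
  end.
Definition eidB (a c : ekind) : 'M['F_2]_(dB (modE a), dB (modE c)) :=
  match a, c with
  | EZ, EZ | EH, EH | EF, EF | EO, EO => 1%:M
  | _, _ => 0
  end.

Lemma eid_hom a c : is_hom (eidT a c) (eidB a c).
Proof. by case: a; case: c; split; mx_eval. Qed.

Lemma eid_inv a : eidT a a *m eidT a a = 1%:M /\ eidB a a *m eidB a a = 1%:M.
Proof. by case: a; rewrite /= !mulmx1. Qed.

Lemma ecan_eid a c : ecanT a c *m eidT c c = eidT a a *m ecanT a c /\
  ecanB a c *m eidB c c = eidB a a *m ecanB a c.
Proof. by case: a; case: c; split; mx_eval. Qed.

Lemma ekcplx_eq_qiso (k1 k2 : int -> ekind) hk1 hk2 :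
  k1 =1 k2 -> qiso (@ekcplx k1 hk1) (@ekcplx k2 hk2).
Proof.
move=> k12.
apply: (@qiso_of_iso (ekcplx hk1) (ekcplx hk2)
  (fun i => eidT (k1 i) (k2 i)) (fun i => eidB (k1 i) (k2 i))
  (fun i => eidT (k2 i) (k1 i)) (fun i => eidB (k2 i) (k1 i))).
- split=> [i|i j]; first exact: eid_hom.
  rewrite /= /edT /edB !k12; case: ifP => _; last by rewrite !mul0mx !mulmx0.
  exact: ecan_eid.
- by move=> i; rewrite /= !k12; case: (eid_inv (k2 i)).
- by move=> i; rewrite /= !k12; case: (eid_inv (k2 i)).
Qed.

Definition hiso_at p q r p' q' r' (dX0 : 'M['F_2]_(q, p)) (dX1 : 'M['F_2]_(r, q))
  (dY0 : 'M['F_2]_(q', p')) (dY1 : 'M['F_2]_(r', q')) (f : 'M['F_2]_(q, q')) :=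
 (forall x : 'rV_q, x *m dX0 = 0 -> (exists y, x *m f = y *m dY1) -> exists z, x = z *m dX1) /\
 (forall y : 'rV_q', y *m dY0 = 0 -> exists x z, x *m dX0 = 0 /\ y = x *m f + z *m dY1).

Definition lmapT (l : bool) a c := if l then ecanT a c else eidT a c.
Definition lmapB (l : bool) a c := if l then ecanB a c else eidB a c.

Lemma lmap_hom l a c : is_hom (lmapT l a c) (lmapB l a c).
Proof. by case: l; [exact: ecan_hom | exact: eid_hom]. Qed.

(* The configurations (kinds in degrees j-1, j, j+1 of source and target, label in
   degree j) occurring below at which [lmapT]/[lmapB] is an isomorphism on homology
   in degree j. *)
Definition window_ok (a b c a' b' c' : ekind) (l : bool) : bool :=
  match a, b, c, a', b', c', l with
  | EF, EF, EF, EF, EF, EF, false => true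
  | EF, EF, EF, EF, EF, EO, false => true
  | EF, EF, EF, EF, EO, EZ, true => true
  | EF, EF, EH, EF, EF, EH, false => true
  | EF, EF, EH, EO, EZ, EZ, false => true
  | EF, EF, EZ, EF, EF, EZ, false => true
  | EF, EH, EZ, EF, EH, EZ, false => true
  | EF, EH, EZ, EF, EZ, EZ, false => true
  | EF, EH, EZ, EZ, EZ, EZ, false => true
  | EF, EZ, EZ, EF, EZ, EZ, false => true
  | EH, EF, EF, EF, EF, EF, false => true
  | EH, EF, EH, EF, EF, EH, false => true
  | EH, EF, EZ, EF, EF, EZ, false => true
  | EH, EZ, EZ, EF, EZ, EZ, false => true
  | EH, EZ, EZ, EH, EZ, EZ, false => true
  | EH, EZ, EZ, EZ, EZ, EZ, false => true
  | EO, EF, EF, EO, EF, EF, false => true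
  | EO, EF, EF, EO, EF, EO, false => true
  | EZ, EF, EF, EZ, EF, EF, false => true
  | EZ, EF, EF, EZ, EF, EO, false => true
  | EZ, EF, EF, EZ, EO, EZ, true => true
  | EZ, EF, EH, EO, EF, EZ, true => true
  | EZ, EH, EF, EF, EF, EF, true => true
  | EZ, EH, EZ, EF, EF, EZ, true => true
  | EZ, EO, EF, EZ, EO, EF, false => true
  | EZ, EZ, EF, EZ, EO, EF, false => true
  | EZ, EZ, EF, EZ, EZ, EF, false => true
  | EZ, EZ, EF, EZ, EZ, EO, false => true
  | EZ, EZ, EH, EO, EF, EF, false => true
  | EZ, EZ, EO, EZ, EZ, EO, false => true
  | EZ, EZ, EZ, EZ, EO, EF, false => true
  | EZ, EZ, EZ, EZ, EZ, EO, false => true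
  | EZ, EZ, EZ, EZ, EZ, EZ, false => true
  | _, _, _, _, _, _, _ => false
  end.

(* The configurations (kinds in degrees i, i-1 of source and target, labels in these
   degrees) occurring below at which [lmapT]/[lmapB] commutes with the differential. *)
Definition square_ok (a b a' b' : ekind) (l l' : bool) : bool :=
  match a, b, a', b', l, l' with
  | EF, EF, EF, EF, false, false => true
  | EF, EF, EO, EF, true, false => true
  | EF, EF, EZ, EO, false, true => true
  | EF, EH, EF, EF, false, true => true
  | EF, EO, EF, EO, false, false => true
  | EF, EZ, EF, EO, true, false => true
  | EF, EZ, EF, EZ, false, false => true
  | EF, EZ, EO, EZ, true, false => true
  | EH, EF, EH, EF, false, false => true
  | EH, EF, EZ, EF, false, true => true
  | EH, EF, EZ, EZ, false, false => true
  | EH, EZ, EF, EF, true, false => true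
  | EO, EZ, EO, EZ, false, false => true
  | EZ, EF, EZ, EF, false, false => true
  | EZ, EH, EZ, EF, false, true => true
  | EZ, EH, EZ, EH, false, false => true
  | EZ, EH, EZ, EZ, false, false => true
  | EZ, EZ, EF, EO, false, false => true
  | EZ, EZ, EO, EZ, false, false => true
  | EZ, EZ, EZ, EZ, false, false => true
  | _, _, _, _, _, _ => false
  end.

Ltac solve_hiso_at := split;
  [ let x := fresh "x" in let y := fresh "y" in
    move=> x; enum_row x; intro_eq_or_absurd; case=> y; enum_row y; intro_eq_or_absurd;
    exists_row ltac:(mx_eval)
  | let y := fresh "y" in
    move=> y; enum_row y; intro_eq_or_absurd;
    exists_row ltac:(exists_row ltac:(split; mx_eval)) ].

Lemma window_ok_hiso_at a b c a' b' c' l : window_ok a b c a' b' c' l ->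
  hiso_at (ecanT b a) (ecanT c b) (ecanT b' a') (ecanT c' b') (lmapT l b b') /\
  hiso_at (ecanB b a) (ecanB c b) (ecanB b' a') (ecanB c' b') (lmapB l b b').
Proof.
case: a; case: b => //; case: c => //; case: a' => //; case: b' => //; case: c' => //;
case: l => // _; rewrite /lmapT /lmapB /=; split; solve_hiso_at.
Qed.

Lemma square_ok_comm a b a' b' l l' : square_ok a b a' b' l l' ->
  ecanT a b *m lmapT l' b b' = lmapT l a a' *m ecanT a' b' /\
  ecanB a b *m lmapB l' b b' = lmapB l a a' *m ecanB a' b'.
Proof.
case: a; case: b => //; case: a' => //; case: b' => //; case: l => //; case: l' => // _;
rewrite /lmapT /lmapB /=; split; mx_eval.
Qed.

Lemma ekcplx_qiso (k1 k2 : int -> ekind) hk1 hk2 (lab : int -> bool) :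
  (forall i, square_ok (k1 i) (k1 (i - 1)) (k2 i) (k2 (i - 1)) (lab i) (lab (i - 1))) ->
  (forall j, window_ok (k1 (j - 1)) (k1 j) (k1 (j + 1))
                       (k2 (j - 1)) (k2 j) (k2 (j + 1)) (lab j)) ->
  qiso (@ekcplx k1 hk1) (@ekcplx k2 hk2).
Proof.
move=> sq win.
exists (fun i => lmapT (lab i) (k1 i) (k2 i)), (fun i => lmapB (lab i) (k1 i) (k2 i)).
split; [split|split].
- by move=> i; apply: lmap_hom.
- move=> i j; rewrite /= /edT /edB; case: eqP => [<-|_]; last by rewrite !mul0mx !mulmx0.
  by have := square_ok_comm (sq (j + 1)); rewrite addrK.
- by move=> j; rewrite /= /edT subrK !eqxx; apply: (window_ok_hiso_at (win j)).1.
- by move=> j; rewrite /= /edB subrK !eqxx; apply: (window_ok_hiso_at (win j)).2.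
Qed.

Ltac case_ifs := repeat (case: ifP => /= ?; try (by exfalso; lia)); try done.

Lemma dIso_qisoL (C D E : cplx) : qiso C D -> dIso D E -> dIso C E.
Proof. by move=> CD; apply: rst_trans; apply: rst_step. Qed.

Lemma dIso_qisoR (C D E : cplx) : qiso D C -> dIso D E -> dIso C E.
Proof. by move=> DC; apply: rst_trans; apply: rst_sym; apply: rst_step. Qed.

Lemma kapA_dual_shift k :
  (fun i => dualE (kapA k (- i))) =1 (fun i => toE (kapA k (i - - k%:Z))).
Proof. by move=> i; rewrite /kapA; case_ifs. Qed.

Definition labH (n i : int) : bool :=
  ((0 <= n) && (i == n)) || ((n == -1) && (i == 0)) || ((n < -1) && (i == n + 2)).

Lemma Hcx_dual_qiso n :
  qiso (ekcplx (toE_ok (@kapH_ok (- (n + 2))))) (ekcplx (dualE_ok (@kapH_ok n))).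
Proof.
by apply: (@ekcplx_qiso _ _ _ _ (labH n)) => [i|j]; rewrite /= /kapH /labH; case_ifs.
Qed.

Definition kapW (r : nat) (i : int) : ekind :=
  if i == r%:Z + 4 then EH
  else if (1 <= i) && (i <= r%:Z + 3) then EF
  else if i == 0 then EO else EZ.

Lemma kapW_ok r l : ebad (kapW r (l + 1 + 1)) (kapW r (l + 1)) (kapW r l) = false.
Proof. by rewrite /kapW; case_ifs. Qed.

Lemma shift_W_qiso r :
  qiso (ekcplx (toE_ok (shift_ok (@kapB_ok r) (r%:Z + 4)))) (ekcplx (kapW_ok r)).
Proof.
by apply: (@ekcplx_qiso _ _ _ _ (fun i => i == 2)) => [i|j]; rewrite /= /kapW /kapB; case_ifs.
Qed.

Lemma W_dual_qiso r : qiso (ekcplx (kapW_ok r)) (ekcplx (dualE_ok (@kapB_ok r))).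
Proof.
apply: (@ekcplx_qiso _ _ _ _ (fun i => i == r%:Z + 2)) => [i|j];
  by rewrite /= /kapW /kapB; case_ifs.
Qed.

Lemma Acx_dual k : dIso (opC (Acx k)) (shiftC (- k%:Z) (Acx k)).
Proof.
apply: dIso_qisoL (opC_qiso _) _.
apply: dIso_qisoL
  (ekcplx_eq_qiso _ (toE_ok (shift_ok (@kapA_ok k) (- k%:Z))) (@kapA_dual_shift k)) _.
apply: dIso_qisoR (toE_qiso _) _.
apply: dIso_qisoR (shiftC_qiso _ _) _.
exact: rst_refl.
Qed.

Lemma Hcx_dual n : dIso (opC (Hcx n)) (Hcx (- (n + 2))).
Proof.
apply: dIso_qisoL (opC_qiso _) _.
apply: dIso_qisoR (Hcx_dual_qiso n) _.
apply: dIso_qisoR (toE_qiso _) _.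
exact: rst_refl.
Qed.

Lemma Bcx_dual r : dIso (opC (Bcx r)) (shiftC (r%:Z + 4) (Bcx r)).
Proof.
apply: dIso_qisoL (opC_qiso _) _.
apply: dIso_qisoR (W_dual_qiso r) _.
apply: dIso_qisoR (shift_W_qiso r) _.
apply: dIso_qisoR (toE_qiso _) _.
apply: dIso_qisoR (shiftC_qiso _ _) _.
exact: rst_refl.
Qed.

Theorem proposition4p13 :
  (forall k : nat, dIso (opC (Acx k)) (shiftC (- (k%:Z)) (Acx k))) /\
  (forall n : int, dIso (opC (Hcx n)) (Hcx (- (n + 2)))) /\
  (forall r : nat, dIso (opC (Bcx r)) (shiftC (r%:Z + 4) (Bcx r))).
Proof. by split; [exact: Acx_dual | split; [exact: Hcx_dual | exact: Bcx_dual]]. Qed.
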